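(* Let $G$ be a finite simple connected regular graph with at least one edge, which is edge-reconstructable (so that $ern(G)$ is defined), is $2$-swappable, and all of whose edges are removal similar (i.e. $G-e\cong G-f$ for all $e,f\in E(G)$). Then $ern(G)\geq 3$.
   Context: All graphs are finite and simple. For a graph $G$ and $e\in E(G)$, the unlabeled graph $G-e$ is an edge-card of $G$; the edge-deck $\mathcal{ED}(G)$ is the multiset of all edge-cards $G-e$, $e\in E(G)$ (taken up to isomorphism). For a sub-multiset $S\subseteq\mathcal{ED}(G)$, a blocker of $S$ is a graph $H\not\cong G$ such that $S\subseteq\mathcal{ED}(H)$ as multisets. $G$ is reconstructable from $S$ if $S$ has no blocker; $G$ is edge-reconstructable if it is reconstructable from $\mathcal{ED}(G)$. For such $G$, the edge reconstruction number $ern(G)$ is the minimum size of a sub-multiset $S\subseteq\mathcal{ED}(G)$ from which $G$ is reconstructable. For $A\subseteq E(G)$ and $B\subseteq E(\bar G)$, $G-A+B$ denotes the graph on $V(G)$ with edge set $(E(G)\setminus A)\cup B$. $G$ is $2$-swappable if for every $e\in E(G)$ there exist $A\subseteq E(G)$ and $B\subseteq E(\bar G)$ with $e\in A$, $|A|\leq 2$, and $G\cong G-A+B$. *)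

From mathcomp Require Import all_boot.
Set Implicit Arguments. Unset Strict Implicit. Unset Printing Implicit Defensive.

(* A graph on vertex set 'I_n is given by its edge set: a set of 2-subsets. *)
Definition graph (n : nat) := {set {set 'I_n}}.

Definition simple_graph n (E : graph n) : bool := [forall e in E, #|e| == 2].

(* Graph isomorphism (possibly between different vertex counts; then false). *)
Definition isog n m (E1 : graph n) (E2 : graph m) : bool :=
  [exists f : {ffun 'I_n -> 'I_m},
     [&& n == m, injectiveb f &
         [forall e : {set 'I_n}, (e \in E1) == (f @: e \in E2)]]].

Definition nonedges n (E : graph n) : graph n :=
  [set e : {set 'I_n} | (#|e| == 2) && (e \notin E)].

(* With A = E(G) this is the multiplicity of X in the edge-deck ED(G).
   A sub-multiset S of ED(G) is the multiset of cards {G - e : e in A} for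
   some A \subset E(G), and |S| = #|A|. *)
Definition card_mult n (E : graph n) (A : {set {set 'I_n}}) m (X : graph m) : nat :=
  #|[set e in A | isog (E :\ e) X]|.

(* S (given by A) is a sub-multiset of ED(H). *)
Definition deck_sub n (E : graph n) (A : {set {set 'I_n}}) m (H : graph m) : Prop :=
  forall m' (X : graph m'), card_mult E A X <= card_mult H H X.

Definition blocker n (E : graph n) (A : {set {set 'I_n}}) m (H : graph m) : Prop :=
  simple_graph H /\ ~~ isog H E /\ deck_sub E A H.

Definition reconstructable_from n (E : graph n) (A : {set {set 'I_n}}) : Prop :=
  forall m (H : graph m), ~ blocker E A H.

Definition edge_reconstructable n (E : graph n) : Prop := reconstructable_from E E.

Definition is_ern n (E : graph n) (r : nat) : Prop :=
  (exists A : {set {set 'I_n}}, A \subset E /\ #|A| = r /\ reconstructable_from E A) /\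
  (forall A : {set {set 'I_n}}, A \subset E -> reconstructable_from E A -> r <= #|A|).

Definition adj n (E : graph n) : rel 'I_n := fun x y => [set x; y] \in E.

Definition connected n (E : graph n) : Prop := forall x y : 'I_n, connect (adj E) x y.

Definition regular n (E : graph n) : Prop :=
  exists d, forall v : 'I_n, #|[set u | adj E v u]| = d.

Definition two_swappable n (E : graph n) : Prop :=
  forall e, e \in E -> exists A B : {set {set 'I_n}},
    [/\ A \subset E, B \subset nonedges E, e \in A, #|A| <= 2 &
        isog E ((E :\: A) :|: B)].

Definition removal_similar n (E : graph n) : Prop :=
  forall e f, e \in E -> f \in E -> isog (E :\ e) (E :\ f).

From mathcomp Require Import all_boot zify.
Set Implicit Arguments. Unset Strict Implicit. Unset Printing Implicit Defensive.

(* Since all cards of G are isomorphic to G - e, a sub-deck of at most two cards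
   is determined by its size. Pick an edge e and a 2-swap G = G - {e, e'} + {b1, b2}
   (a 1-swap would destroy regularity). Then H = G - e + b1 is not regular, hence
   not isomorphic to G, yet H - b1 = G - e and H - e' = (G - {e, e'} + {b1, b2}) - b2,
   a card of a graph isomorphic to G. So H is a blocker of every sub-deck of size
   at most two. *)

Lemma isogP n (E1 E2 : graph n) :
  reflect (exists2 f : 'I_n -> 'I_n, injective f & forall s, (s \in E1) = (f @: s \in E2))
          (isog E1 E2).
Proof.
apply: (iffP existsP) => [[f /and3P [_ /injectiveP f_inj /forallP fE]]|[f f_inj fE]].
  by exists f => // s; apply/eqP; exact: fE.
exists [ffun x => f x]; rewrite eqxx /=; apply/andP; split.
  by apply/injectiveP => x y; rewrite !ffunE => /f_inj.
apply/forallP => s; rewrite (fE s) (_ : [ffun x => f x] @: s = f @: s) //.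
by apply: eq_imset => x; rewrite ffunE.
Qed.

Lemma isog_trans n m k (E1 : graph n) (E2 : graph m) (E3 : graph k) :
  isog E1 E2 -> isog E2 E3 -> isog E1 E3.
Proof.
case/existsP=> f /and3P [/eqP eq_nm /injectiveP f_inj /forallP fE].
case/existsP=> g /and3P [/eqP eq_mk /injectiveP g_inj /forallP gE].
subst m k; apply/isogP; exists (g \o f); first exact: inj_comp.
by move=> s; rewrite (eqP (fE s)) (eqP (gE _)) imset_comp.
Qed.

Lemma imset_can (aT rT : finType) (f : rT -> aT) (g : aT -> rT) (s : {set aT}) :
  cancel g f -> f @: (g @: s) = s.
Proof. by move=> gK; rewrite -imset_comp -[RHS]imset_id; apply: eq_imset. Qed.

Lemma isog_sym n (E1 E2 : graph n) : isog E1 E2 -> isog E2 E1.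
Proof.
case/isogP=> f f_inj fE; apply/isogP; exists (invF f_inj).
  exact: can_inj (f_invF f_inj).
by move=> s; rewrite fE imset_can //; exact: f_invF.
Qed.

Lemma isog_card n (E1 E2 : graph n) : isog E1 E2 -> #|E1| = #|E2|.
Proof.
case/isogP=> f f_inj fE; rewrite -(card_imset E1 (imset_inj f_inj)).
apply: eq_card => t; apply/imsetP/idP => [[s sE1 ->]|tE2]; first by rewrite -fE.
have f_invK := imset_can t (f_invF f_inj).
by exists (invF f_inj @: t); rewrite ?fE f_invK.
Qed.

Lemma isog_delete n (E1 E2 : graph n) s :
  isog E1 E2 -> s \in E2 -> exists2 t, t \in E1 & isog (E2 :\ s) (E1 :\ t).
Proof.
case/isogP=> f f_inj fE sE2; have f_invK := imset_can s (f_invF f_inj).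
exists (invF f_inj @: s); first by rewrite fE f_invK.
apply: isog_sym; apply/isogP; exists f => // u.
by rewrite !inE fE -(inj_eq (imset_inj f_inj)) f_invK.
Qed.

Lemma isog_regular n (E1 E2 : graph n) : isog E1 E2 -> regular E2 -> regular E1.
Proof.
case/isogP=> f f_inj fE [d deg_d]; exists d => v.
rewrite -(deg_d (f v)) -[RHS](card_preimset _ f_inj); apply: eq_card => u.
by rewrite !inE /adj fE imsetU1 imset_set1.
Qed.

Lemma simple_graph_card n (E : graph n) s : simple_graph E -> s \in E -> #|s| = 2.
Proof. by move=> Esimple sE; apply/eqP; exact: forall_inP Esimple s sE. Qed.

Lemma nonedgesP n (E : graph n) b : b \in nonedges E -> #|b| = 2 /\ b \notin E.
Proof. by rewrite inE => /andP [/eqP -> ->]. Qed.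

Lemma cards2_mem (T : finType) (e : {set T}) x :
  #|e| = 2 -> x \in e -> exists2 z, z != x & e = [set x; z].
Proof.
move=> card_e xe.
have /cards1P [z ez] : #|e :\ x| == 1.
  by move: card_e; rewrite (cardsD1 x e) xe add1n => -[->].
exists z; last by rewrite -(setD1K xe) ez.
by apply/eqP=> zx; have := set11 z; rewrite -ez zx setD11.
Qed.

(* A vertex of e outside b loses a neighbour, one of b outside e gains one. *)
Lemma replace_edge_not_regular n (E : graph n) e b :
  regular E -> e \in E -> #|e| = 2 -> b \notin E -> #|b| = 2 ->
  ~ regular (E :\ e :|: [set b]).
Proof.
move=> [d deg_d] eE card_e bE card_b [d' deg_d'].
have neq_eb : e != b by apply: contraNneq bE => <-.
have [x xe xb] : exists2 x, x \in e & x \notin b.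
  by apply/subsetPn; apply: contra neq_eb => sub; rewrite eqEcard sub card_e card_b.
have [y yb ye] : exists2 y, y \in b & y \notin e.
  by apply/subsetPn; apply: contra neq_eb => sub; rewrite eq_sym eqEcard sub card_e card_b.
have [z _ def_e] := cards2_mem card_e xe.
have [w _ def_b] := cards2_mem card_b yb.
have lt_d'd : d' < d.
  rewrite -(deg_d x) -(deg_d' x); apply: proper_card; apply/properP; split.
    apply/subsetP => u; rewrite !inE /adj !inE => /orP [/andP [_ ->] //|/eqP xub].
    by move: xb; rewrite -xub !inE eqxx.
  exists z; first by rewrite !inE /adj -def_e.
  by rewrite !inE /adj !inE -def_e eqxx /= (negbTE neq_eb).
have lt_dd' : d < d'.
  rewrite -(deg_d y) -(deg_d' y); apply: proper_card; apply/properP; split.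
    apply/subsetP => u; rewrite !inE /adj !inE => ->; rewrite andbT orbC.
    by apply/orP; right; apply: contraNneq ye => <-; rewrite !inE eqxx.
  exists w; first by rewrite !inE /adj !inE -def_b eqxx orbT.
  by rewrite !inE /adj -def_b.
by move: (ltn_trans lt_d'd lt_dd'); rewrite ltnn.
Qed.

Lemma card_mult_removal_similar n (E A : graph n) e m (X : graph m) :
  removal_similar E -> A \subset E -> e \in E ->
  card_mult E A X = if isog (E :\ e) X then #|A| else 0.
Proof.
move=> Hrs AE eE; rewrite /card_mult; case: ifP => isoX.
  apply: eq_card => a; rewrite inE andb_idr // => aA.
  exact: isog_trans (Hrs a e (subsetP AE a aA) eE) isoX.
apply/eqP; rewrite cards_eq0; apply/eqP/setP => a; rewrite !inE.
apply/negbTE/andP => -[aA isoX'].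
by rewrite (isog_trans (Hrs e a eE (subsetP AE a aA)) isoX') in isoX.
Qed.

(* The swap removes as many edges as it adds, and removing a single edge would
   break regularity. *)
Lemma regular_two_swap n (E : graph n) e :
  simple_graph E -> regular E -> two_swappable E -> e \in E ->
  exists e' b1 b2, [/\ e' \in E, e' != e, [set b1; b2] \subset nonedges E, b1 != b2 &
                       isog E ((E :\: [set e; e']) :|: [set b1; b2])].
Proof.
move=> Hsimple Hreg Hswap eE.
have [A [B [AE BN eA cardA isoE]]] := Hswap e eE.
have nonedgeB b : b \in B -> #|b| = 2 /\ b \notin E by move/(subsetP BN)/nonedgesP.
have disjB : (E :\: A) :&: B = set0.
  apply/setP => s; rewrite !inE; apply/negbTE/andP => -[/andP [_ sE] /nonedgeB [_]].
  by rewrite sE.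
have := isog_card isoE; rewrite cardsU cardsD (setIidPr AE) disjB cards0 subn0 => count.
have card_A_pos : 0 < #|A| by apply/card_gt0P; exists e.
have card_AE : #|A| <= #|E| by apply: subset_leq_card.
have card_BA : #|B| = #|A| by lia.
have [card_A1|card_A2] : #|A| = 1 \/ #|A| = 2 by lia.
  have /cards1P [a defA] : #|A| == 1 by rewrite card_A1.
  move: eA; rewrite defA inE => /eqP ea; subst a.
  have /cards1P [b defB] : #|B| == 1 by rewrite card_BA card_A1.
  have [card_b bE] : #|b| = 2 /\ b \notin E by apply: nonedgeB; rewrite defB set11.
  case: (replace_edge_not_regular Hreg eE (simple_graph_card Hsimple eE) bE card_b).
  by rewrite -defA -defB; apply: isog_regular Hreg; apply: isog_sym.
have [e' e'e defA] := cards2_mem card_A2 eA.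
have /cards2P [b1 [b2 [b12 defB]]] : #|B| == 2 by rewrite card_BA card_A2.
exists e', b1, b2; split=> //; rewrite -?defA -?defB //.
by apply: (subsetP AE); rewrite defA !inE eqxx orbT.
Qed.

Lemma two_swap_blocker n (E A : graph n) e e' b1 b2 :
  simple_graph E -> regular E -> removal_similar E -> A \subset E -> #|A| <= 2 ->
  e \in E -> e' \in E -> e' != e -> [set b1; b2] \subset nonedges E -> b1 != b2 ->
  isog E ((E :\: [set e; e']) :|: [set b1; b2]) ->
  blocker E A (E :\ e :|: [set b1]).
Proof.
move=> Hsimple Hreg Hrs AE cardA eE e'E e'e BN b12 isoE.
have nonedge b : b \in [set b1; b2] -> #|b| = 2 /\ b \notin E by move/(subsetP BN)/nonedgesP.
have [card_b1 b1E] := nonedge b1 (set21 _ _).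
have [_ b2E] := nonedge b2 (set22 _ _).
set H := E :\ e :|: [set b1].
split; [|split].
- apply/forall_inP => s; rewrite !inE => /orP [/andP [_ sE]|/eqP ->].
    by rewrite (simple_graph_card Hsimple sE).
  by rewrite card_b1.
- apply/negP => /isog_regular /(_ Hreg).
  exact: replace_edge_not_regular Hreg eE (simple_graph_card Hsimple eE) b1E card_b1.
move=> m X; rewrite (card_mult_removal_similar _ Hrs AE eE); case: ifP => // isoX.
have H_b1 : H :\ b1 = E :\ e.
  apply/setP => s; rewrite !inE; have [->|_] := eqVneq s b1; last by rewrite orbF.
  by rewrite (negbTE b1E) andbF.
have b1e' : b1 != e' by apply: contraNneq b1E => ->.
have H_e' : H :\ e' = ((E :\: [set e; e']) :|: [set b1; b2]) :\ b2.
  apply/setP => s; rewrite !inE; have [->|_] := eqVneq s b2.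
    by rewrite (negbTE b2E) !andbF [b2 == b1]eq_sym (negbTE b12) andbF.
  have [->|_] := eqVneq s b1; first by rewrite b1e' (negbTE b1E) !orbT.
  by rewrite !orbF negb_or andbCA andbA.
have [y yE isoH_e'] : exists2 y, y \in E & isog (H :\ e') (E :\ y).
  by rewrite H_e'; apply: isog_delete isoE _; rewrite !inE eqxx !orbT.
apply: (leq_trans cardA); rewrite /card_mult.
apply: (@leq_trans #|[set b1; e']|); first by rewrite cards2 b1e'.
apply: subset_leq_card; apply/subsetP => s.
rewrite !inE => /orP [/eqP ->|/eqP ->]; first by rewrite eqxx orbT H_b1.
rewrite e'E e'e /=.
exact: isog_trans isoH_e' (isog_trans (Hrs y e yE eE) isoX).
Qed.

Theorem mainTheorem2 (n : nat) (E : graph n)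
  (Hsimple : simple_graph E) (Hconn : connected E) (Hreg : regular E)
  (Hedge : E != set0) (Hrec : edge_reconstructable E)
  (Hswap : two_swappable E) (Hrs : removal_similar E)
  (r : nat) (Hern : is_ern E r) : 3 <= r.
Proof.
have [[A [AE [cardA recA]]] _] := Hern.
rewrite ltnNge; apply/negP => small_r.
case/set0Pn: Hedge => e eE.
have [e' [b1 [b2 [e'E e'e BN b12 isoE]]]] := regular_two_swap Hsimple Hreg Hswap eE.
apply: (recA n (E :\ e :|: [set b1])).
by apply: two_swap_blocker isoE => //; rewrite cardA.
Qed.
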